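(* Let $x\in C[0,1]$ have Faber--Schauder development $$x=x(0)+(x(1)-x(0))e_\emptyset+\sum_{m=0}^\infty\sum_{k=0}^{2^m-1}\theta_{m,k}e_{m,k},\qquad \theta_{m,k}=2^{m/2}\Big(2x\big(\tfrac{2k+1}{2^{m+1}}\big)-x\big(\tfrac k{2^m}\big)-x\big(\tfrac{k+1}{2^m}\big)\Big),$$ and let $(\mathbb{T}_n)$ be the sequence of dyadic partitions. Then, for $t\in\bigcup_n\mathbb{T}_n$, the following conditions are equivalent. (a) The quadratic variation $\langle x\rangle_t$ (along the dyadic partitions) exists. (b) The limit $\ell_1(t):=\lim_{n\to\infty}\frac1{2^n}\sum_{m=0}^{n-1}\sum_{k=0}^{\lfloor (2^m-1)t\rfloor}\theta_{m,k}^2$ exists. (c) The limit $\ell_2(t):=\lim_{n\to\infty}\frac1{2^n}\sum_{k=0}^{\lfloor (2^n-1)t\rfloor}\theta_{n,k}^2$ exists. In this case, $\langle x\rangle_t=\ell_1(t)=\ell_2(t)$.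
   Context: The dyadic partitions are $\mathbb{T}_n=\{k2^{-n}: k=0,\dots,2^n\}$. For $s\in\mathbb{T}_n$, $s'$ denotes the successor of $s$ in $\mathbb{T}_n$ ($s'=\min\{t\in\mathbb{T}_n: t>s\}$ if $s<1$, and $s'=1$ if $s=1$). For $x\in C[0,1]$, $\langle x\rangle^n_t:=\sum_{s\in\mathbb{T}_n,\,s\le t}(x(s')-x(s))^2$, and $x$ admits the quadratic variation $\langle x\rangle_t$ at $t$ if $\langle x\rangle_t:=\lim_{n\to\infty}\langle x\rangle^n_t$ exists. The Faber--Schauder functions on $[0,1]$ are $e_\emptyset(t)=t$, $e_{0,0}(t)=\max\{0,\min\{t,1-t\}\}$, and $e_{n,k}(t)=2^{-n/2}e_{0,0}(2^nt-k)$ for $n\ge1$, $k=0,\dots,2^n-1$; every $x\in C[0,1]$ has the uniformly convergent development stated in the claim. *)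

From HB Require Import structures.
From mathcomp Require Import all_boot all_order all_algebra.
From mathcomp Require Import all_classical all_reals all_analysis.
Set Implicit Arguments. Unset Strict Implicit. Unset Printing Implicit Defensive.
Import Order.TTheory GRing.Theory Num.Theory.
Import numFieldNormedType.Exports.
Local Open Scope ring_scope.

Definition dyad {R : realType} (n k : nat) : R := k%:R / (2%:R ^+ n).

Definition in_dyadic_partitions {R : realType} (t : R) : Prop :=
  exists n k : nat, (k <= 2 ^ n)%N /\ t = dyad n k.

(* Successor index of k in T_n (s' = 1 if s = 1). *)
Definition succ_idx (n k : nat) : nat := minn k.+1 (2 ^ n).

Definition qv_approx {R : realType} (x : R -> R) (t : R) (n : nat) : R :=
  \sum_(0 <= k < (2 ^ n).+1 | dyad n k <= t)
     (x (dyad n (succ_idx n k)) - x (dyad n k)) ^+ 2.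

Definition fs_coef {R : realType} (x : R -> R) (m k : nat) : R :=
  Num.sqrt (2%:R ^+ m) *
    (2%:R * x ((2 * k + 1)%:R / 2%:R ^+ m.+1) - x (dyad m k) - x (dyad m k.+1)).

(* floor((2^m - 1) t) for t >= 0, as a natural number. *)
Definition fl {R : realType} (m : nat) (t : R) : nat :=
  Num.truncn ((2%:R ^+ m - 1) * t).

Definition ell1_seq {R : realType} (x : R -> R) (t : R) (n : nat) : R :=
  (2%:R ^+ n)^-1 *
    \sum_(0 <= m < n) \sum_(0 <= k < (fl m t).+1) fs_coef x m k ^+ 2.

Definition ell2_seq {R : realType} (x : R -> R) (t : R) (n : nat) : R :=
  (2%:R ^+ n)^-1 * \sum_(0 <= k < (fl n t).+1) fs_coef x n k ^+ 2.

From HB Require Import structures.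
From mathcomp Require Import all_boot all_order all_algebra.
From mathcomp Require Import all_classical all_reals all_analysis.
From mathcomp Require Import ring lra.
Import Order.TTheory GRing.Theory Num.Theory.
Import numFieldNormedType.Exports.
Local Open Scope ring_scope.
Local Open Scope classical_set_scope.

(** Let t = j 2^-N. From level N on, <x>^n_t is the sum S_n of the squared
    increments of x on T_n to the left of t, plus one increment at t that
    vanishes by continuity. Splitting each step of T_n in two and using
    (a - b)^2 + (b - c)^2 = ((a - c)^2 + (2b - a - c)^2) / 2 gives
    S_(n+1) = (S_n + l2_n) / 2, and directly l1_(n+1) = (l1_n + l2_n) / 2.
    A sequence with u_(n+1) = (u_n + c_n) / 2 converges to L exactly when c
    does, so all three limits exist together and agree. *)

Section HalvingRecursion.
Context {R : archiRealFieldType}.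

Lemma cvg_halving_rec (u c : nat -> R) (N : nat) (L : R) :
  (forall n, (N <= n)%N -> u n.+1 = (u n + c n) / 2) ->
  c @ \oo --> L -> u @ \oo --> L.
Proof.
move=> urec /cvgrPdist_le cL; apply/cvgrPdist_le => e e0.
have e20 : 0 < e / 2 by rewrite divr_gt0.
have [M0 _ cM0] := cL _ e20.
pose M := maxn N M0.
pose K := `|L - u M| * 2 ^+ M.
have bound k : `|L - u (k + M)%N| <= geometric K 2^-1 (k + M)%N + e / 2.
  elim: k => [|k IH].
    rewrite add0n /geometric /= /K -mulrA -exprMn divff ?expr1n ?mulr1 //.
    by rewrite lerDl ltW.
  have Mk : (N <= k + M)%N by rewrite (leq_trans (leq_maxl N M0)) ?leq_addl.
  have ck : `|L - c (k + M)%N| <= e / 2.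
    by apply: cM0; rewrite /= (leq_trans (leq_maxr N M0)) ?leq_addl.
  rewrite addSn urec // /geometric /= exprS.
  have -> : L - (u (k + M)%N + c (k + M)%N) / 2 =
            ((L - u (k + M)%N) + (L - c (k + M)%N)) / 2 by field.
  rewrite normrM normfV (ger0_norm (ler0n _ 2)).
  rewrite [leRHS](_ : _ = (geometric K 2^-1 (k + M)%N + e / 2 + e / 2) / 2).
    by rewrite ler_pM2r ?invr_gt0 ?ltr0n // (le_trans (ler_normD _ _)) ?lerD.
  by rewrite /geometric /=; field.
have /cvgrPdist_le gK := @cvg_geometric R K 2^-1
  ltac:(by rewrite ger0_norm ?invr_ge0 ?ler0n // invf_lt1 ?ltr1n).
near=> n.
have Mn : (M <= n)%N by near: n; exists M.
rewrite -(subnK Mn); apply: le_trans (bound _) _.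
rewrite subnK // [leRHS]splitr lerD2r.
suff : `|0 - geometric K 2^-1 n| <= e / 2.
  by rewrite sub0r normrN; apply: le_trans; exact: ler_norm.
by near: n; exact: gK.
Unshelve. all: by end_near. Qed.

Lemma cvg_halving_rec_iff {u c : nat -> R} {N : nat} :
  (forall n, (N <= n)%N -> u n.+1 = (u n + c n) / 2) ->
  forall L : R, u @ \oo --> L <-> c @ \oo --> L.
Proof.
move=> urec L; split; last exact: cvg_halving_rec urec.
move=> uL; have uSL : (fun n => u n.+1) @ \oo --> L by rewrite cvg_shiftS.
rewrite (_ : L = 2 * L - L); last by rewrite mulr2n mulrDl mul1r addrK.
have cL : (fun n => 2 * u n.+1 - u n) @ \oo --> 2 * L - L.
  by apply: cvgB => //; apply: cvgM => //; exact: cvg_cst.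
apply: cvg_trans cL; apply: near_eq_cvg.
by exists N => // n /= Nn; rewrite urec //; field.
Qed.

End HalvingRecursion.

Lemma cvg_sub0_iff {R : numFieldType} {f g : nat -> R} :
  (fun n => f n - g n) @ \oo --> 0 -> forall L : R, f @ \oo --> L <-> g @ \oo --> L.
Proof.
move=> fg0 L; split=> [fL | /(cvg_sub0 fg0)//].
apply: (cvg_sub0 _ fL); rewrite -oppr0.
rewrite (_ : (g - f)%R = (fun n => - (f n - g n))); first exact: cvgN.
by apply/funext => n; rewrite opprB.
Qed.

Lemma cvg_to_iff_of_cvg {R : numFieldType} {f g : nat -> R} {a : R} :
  f @ \oo --> a -> g @ \oo --> a -> forall L : R, f @ \oo --> L <-> g @ \oo --> L.
Proof.
move=> fa ga L; split=> [fL | gL].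
  by rewrite -(cvg_unique _ fa fL).
by rewrite -(cvg_unique _ ga gL).
Qed.

Lemma cvgn_limn_of_cvg_to_iff {R : numFieldType} {u v : nat -> R} :
  (forall L : R, u @ \oo --> L <-> v @ \oo --> L) ->
  (cvgn u <-> cvgn v) /\ (cvgn u -> limn u = limn v).
Proof.
move=> uv; split; first by split=> /cvg_ex [L /uv vL]; apply/cvg_ex; exists L.
by move=> /cvg_ex [L uL]; rewrite (cvg_lim _ uL) // (cvg_lim _ ((uv L).1 uL)).
Qed.

Lemma cvg_sqr {R : numFieldType} {f : nat -> R} {a : R} :
  f @ \oo --> a -> (fun n => f n ^+ 2) @ \oo --> a ^+ 2.
Proof. by move=> fa; under eq_fun do rewrite expr2; rewrite expr2; exact: cvgM. Qed.

Lemma cvg_within_comp {R : realType} (A : set R) (x : R -> R) (s : nat -> R) (t : R) :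
  {within A, continuous x} -> A t -> (forall n, A (s n)) ->
  s @ \oo --> t -> (fun n => x (s n)) @ \oo --> x t.
Proof.
move=> xA At sA st.
have := (@subspace_continuousP R^o A R^o x).1 xA t At.
apply: cvg_trans => P /= /st [M _ HM]; exists M => // n /HM; exact.
Qed.

Section Dyadic.
Context {R : realType}.
Implicit Types (n k : nat).

Lemma exp2_gt0 n : 0 < (2%:R : R) ^+ n.
Proof. by rewrite exprn_gt0 ?ltr0n. Qed.

Lemma exp2_neq0 n : (2%:R : R) ^+ n != 0.
Proof. by rewrite gt_eqF ?exp2_gt0. Qed.

Lemma ler_dyad n k k' : (dyad n k <= dyad n k' :> R) = (k <= k')%N.
Proof. by rewrite /dyad ler_pM2r ?invr_gt0 ?exp2_gt0 // ler_nat. Qed.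

Lemma dyad_ge0 n k : 0 <= dyad n k :> R.
Proof. by rewrite divr_ge0 ?ler0n // ltW ?exp2_gt0. Qed.

Lemma dyad_le1 n k : (dyad n k <= 1 :> R) = (k <= 2 ^ n)%N.
Proof. by rewrite /dyad ler_pdivrMr ?exp2_gt0 // mul1r -natrX ler_nat. Qed.

Lemma dyad0 n : dyad n 0 = 0 :> R.
Proof. by rewrite /dyad mul0r. Qed.

Lemma dyad_refine N n j : (N <= n)%N -> dyad n (j * 2 ^ (n - N)) = dyad N j :> R.
Proof.
move=> Nn; rewrite /dyad natrM natrX -{2}(subnKC Nn) exprD.
by field; rewrite !exp2_neq0.
Qed.

Lemma dyad_double n k : dyad n.+1 k.*2 = dyad n k :> R.
Proof. by have := dyad_refine n n.+1 k (leqnSn n); rewrite subSnn expn1 muln2. Qed.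

Lemma dyadS n k : dyad n k.+1 = dyad n k + (2^-1) ^+ n :> R.
Proof. by rewrite /dyad exprVn -natr1 mulrDl mul1r. Qed.

Lemma fl_dyad n J : (0 < J <= 2 ^ n)%N -> fl n (dyad n J : R) = J.-1.
Proof.
case: J => // J /= J2n; rewrite /fl; apply/eqP.
have E : (2%:R ^+ n - 1) * (dyad n J.+1 : R) = J%:R + (1 - dyad n J.+1).
  by rewrite /dyad -natr1; field; exact: exp2_neq0.
have d0 : 0 < dyad n J.+1 :> R by rewrite divr_gt0 ?exp2_gt0 ?ltr0n.
have d1 := dyad_le1 n J.+1; rewrite J2n in d1.
rewrite E truncn_eq; last by rewrite addr_ge0 ?ler0n ?subr_ge0.
by rewrite -natr1; apply/andP; split; lra.
Qed.

End Dyadic.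

Lemma big_nat_double (V : nmodType) (f : nat -> V) m :
  \sum_(0 <= k < m.*2) f k = \sum_(0 <= k < m) (f k.*2 + f k.*2.+1).
Proof.
elim: m => [|m IH]; first by rewrite !big_geq.
by rewrite doubleS !big_nat_recr //= IH addrA.
Qed.

Section DyadicSums.
Context {R : realType} (x : R -> R).

Definition sqincr_sum (n J : nat) : R :=
  \sum_(0 <= k < J) (x (dyad n k.+1) - x (dyad n k)) ^+ 2.

Lemma qv_approx_dyad n J : (J <= 2 ^ n)%N ->
  qv_approx x (dyad n J) n =
  sqincr_sum n J + (x (dyad n (succ_idx n J)) - x (dyad n J)) ^+ 2.
Proof.
move=> J2n; rewrite /qv_approx.
under eq_bigl => k do rewrite ler_dyad.
rewrite (_ : \sum_(0 <= k < (2 ^ n).+1 | (k <= J)%N) _ =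
  \sum_(0 <= k < J.+1) (x (dyad n (succ_idx n k)) - x (dyad n k)) ^+ 2); last first.
  by rewrite (big_nat_widen _ _ _ _ _ (_ : J.+1 <= (2 ^ n).+1)%N).
rewrite big_nat_recr //=; congr (_ + _); apply: eq_big_nat => k /andP [_ kJ].
by rewrite /succ_idx (minn_idPl (leq_trans kJ J2n)).
Qed.

Lemma fs_coef_sqr n k :
  fs_coef x n k ^+ 2 = 2 ^+ n *
    (2 * x (dyad n.+1 k.*2.+1) - x (dyad n.+1 k.*2) - x (dyad n.+1 k.*2.+2)) ^+ 2.
Proof.
rewrite /fs_coef exprMn sqr_sqrtr ?exprn_ge0 ?ler0n //.
rewrite -(dyad_double n k) -(dyad_double n k.+1).
by rewrite doubleS addn1 mul2n.
Qed.

(* Termwise, this is the identity (a - b)^2 + (b - c)^2 = ((a - c)^2 + (2b - a - c)^2) / 2. *)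
Lemma sqincr_sum_double n J :
  sqincr_sum n.+1 J.*2 =
  (sqincr_sum n J + (2%:R ^+ n)^-1 * \sum_(0 <= k < J) fs_coef x n k ^+ 2) / 2.
Proof.
rewrite /sqincr_sum big_nat_double mulr_sumr -big_split /= mulr_suml.
apply: eq_big_nat => k _.
rewrite fs_coef_sqr -(dyad_double n k) -(dyad_double n k.+1) doubleS.
by field; exact: exp2_neq0.
Qed.

Lemma ell2_seq_dyad n J : (0 < J <= 2 ^ n)%N ->
  ell2_seq x (dyad n J) n = (2%:R ^+ n)^-1 * \sum_(0 <= k < J) fs_coef x n k ^+ 2.
Proof. by move=> J2n; rewrite /ell2_seq fl_dyad // prednK //; case/andP: J2n. Qed.

Lemma ell1_seqS t n : ell1_seq x t n.+1 = (ell1_seq x t n + ell2_seq x t n) / 2.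
Proof.
rewrite /ell1_seq /ell2_seq big_nat_recr //= exprS.
by field; exact: exp2_neq0.
Qed.

Lemma refine_idx_le N n j : (j <= 2 ^ N)%N -> (N <= n)%N -> (j * 2 ^ (n - N) <= 2 ^ n)%N.
Proof. by move=> j2N Nn; rewrite -(dyad_le1 (R := R)) dyad_refine // dyad_le1. Qed.

Lemma sqincr_sum_refineS N j n : (0 < j <= 2 ^ N)%N -> (N <= n)%N ->
  sqincr_sum n.+1 (j * 2 ^ (n.+1 - N)) =
  (sqincr_sum n (j * 2 ^ (n - N)) + ell2_seq x (dyad N j) n) / 2.
Proof.
move=> /andP [j0 j2N] Nn.
rewrite subSn // expnS mulnCA mul2n sqincr_sum_double -(dyad_refine _ _ j Nn).
by rewrite ell2_seq_dyad // muln_gt0 j0 expn_gt0 refine_idx_le.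
Qed.

End DyadicSums.

Section ContinuousLimits.
Context {R : realType} {x : R -> R}.
Hypothesis xcont : {within `[0%R, 1%R], continuous x}.

Let x_cvg (s : nat -> R) (t : R) : (forall n, 0 <= s n <= 1) -> 0 <= t <= 1 ->
  s @ \oo --> t -> (fun n => x (s n)) @ \oo --> x t.
Proof. by move=> s01 t01; apply: cvg_within_comp => //= [|n]; rewrite in_itv. Qed.

Lemma qv_approx_sub_sqincr_cvg N j : (j <= 2 ^ N)%N ->
  (fun n => qv_approx x (dyad N j) n - sqincr_sum x n (j * 2 ^ (n - N))) @ \oo --> 0.
Proof.
move=> j2N; pose J := fun n => (j * 2 ^ (n - N))%N.
pose s n : R := dyad n (succ_idx n (J n)).
have s_itv n : 0 <= s n <= 1 by rewrite dyad_ge0 dyad_le1 /succ_idx geq_minr.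
have st : s @ \oo --> dyad N j.
  apply: (@squeeze_cvgr _ _ _ _ (fun=> dyad N j) (fun n => dyad N j + 2^-1 ^+ n)).
  - exists N => // n /= Nn; rewrite -(dyad_refine _ _ j Nn) -dyadS !ler_dyad.
    by rewrite /succ_idx leq_min leqnSn refine_idx_le ?geq_minl.
  - exact: cvg_cst.
  - rewrite -[X in _ --> X]addr0; apply: cvgD; first exact: cvg_cst.
    by apply: cvg_expr; rewrite ger0_norm ?invr_ge0 ?ler0n // invf_lt1 ?ltr1n.
have t_itv : 0 <= (dyad N j : R) <= 1 by rewrite dyad_ge0 dyad_le1.
have tail : (fun n => (x (s n) - x (dyad N j)) ^+ 2) @ \oo --> 0.
  rewrite (_ : 0 = (x (dyad N j) - x (dyad N j)) ^+ 2); last by rewrite subrr expr0n.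
  exact: cvg_sqr (cvgB (x_cvg _ _ s_itv t_itv st) (cvg_cst _)).
apply: cvg_trans tail; apply: near_eq_cvg; exists N => // n /= Nn.
by rewrite -(dyad_refine _ _ j Nn) qv_approx_dyad ?refine_idx_le // addrAC subrr add0r.
Qed.

Lemma ell2_seq0_cvg : ell2_seq x 0 @ \oo --> 0.
Proof.
have d1_itv n : 0 <= (dyad n 1 : R) <= 1 by rewrite dyad_ge0 dyad_le1 expn_gt0.
have d1 : (fun n => dyad n 1 : R) @ \oo --> 0.
  rewrite (_ : (fun n => _) = geometric 1 2^-1).
    by apply: cvg_geometric; rewrite ger0_norm ?invr_ge0 ?ler0n // invf_lt1 ?ltr1n.
  by apply/funext => n; rewrite /dyad /geometric /= exprVn !mul1r.
have x0_itv : 0 <= (0 : R) <= 1 by rewrite lexx ler01.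
have xa : (fun n => x (dyad n.+1 1)) @ \oo --> x 0.
  by apply: x_cvg => //; rewrite (cvg_shiftS (fun n => dyad n 1)).
have xb : (fun n => x (dyad n.+1 2)) @ \oo --> x 0.
  by under eq_fun do rewrite -[2%N]/(1.*2)%N dyad_double; exact: x_cvg.
have -> : ell2_seq x 0 =
    (fun n => (2 * x (dyad n.+1 1) - x (dyad n.+1 0) - x (dyad n.+1 2)) ^+ 2).
  apply/funext => n; rewrite /ell2_seq /fl mulr0 truncn0 big_nat1 fs_coef_sqr.
  by rewrite mulKf ?exp2_neq0.
rewrite (_ : 0 = (2 * x 0 - x 0 - x 0) ^+ 2); last first.
  by rewrite mulr2n mulrDl mul1r addrK subrr expr0n.
under eq_fun do rewrite dyad0.
apply: cvg_sqr; apply: cvgB xb; apply: cvgB; last exact: cvg_cst.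
by apply: cvgM xa; exact: cvg_cst.
Qed.

End ContinuousLimits.

Theorem proposition2p1 (R : realType) (x : R -> R)
  (hx : {within `[0%R, 1%R], continuous x}) (t : R)
  (ht : in_dyadic_partitions t) :
  [/\ (cvgn (qv_approx x t) <-> cvgn (ell1_seq x t)),
      (cvgn (qv_approx x t) <-> cvgn (ell2_seq x t)) &
      (cvgn (qv_approx x t) ->
         limn (qv_approx x t) = limn (ell1_seq x t) /\
         limn (qv_approx x t) = limn (ell2_seq x t))].
Proof.
suff [qv_ell1 qv_ell2] :
    (forall L : R, qv_approx x t @ \oo --> L <-> ell1_seq x t @ \oo --> L) /\
    (forall L : R, qv_approx x t @ \oo --> L <-> ell2_seq x t @ \oo --> L).
  have [c1 l1] := cvgn_limn_of_cvg_to_iff qv_ell1.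
  have [c2 l2] := cvgn_limn_of_cvg_to_iff qv_ell2.
  by split=> // qv_cvg; split; [exact: l1 | exact: l2].
have ell12 (L : R) : ell1_seq x t @ \oo --> L <-> ell2_seq x t @ \oo --> L.
  by apply: (cvg_halving_rec_iff (N := 0)) => n _; exact: ell1_seqS.
case: ht => N [j [j2N tE]]; rewrite tE in ell12 *.
have qv_sqincr := qv_approx_sub_sqincr_cvg hx N j j2N.
(* At t = 0, l2_n still counts theta_(n,0) although S_n = 0, so the recursion
   fails there; instead all three sequences tend to 0. *)
case: (posnP j) => [j0 | j_gt0].
  rewrite j0 dyad0 in ell12 qv_sqincr *.
  have qv0 : qv_approx x 0 @ \oo --> 0.
    apply/(cvg_sub0_iff qv_sqincr).
    by under eq_fun do rewrite mul0n /sqincr_sum big_geq //; exact: cvg_cst.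
  have ell2_0 := ell2_seq0_cvg hx.
  have ell1_0 := (ell12 0).2 ell2_0.
  by split; [exact: cvg_to_iff_of_cvg qv0 ell1_0 | exact: cvg_to_iff_of_cvg qv0 ell2_0].
have sqincr_ell2 (L : R) : (fun n => sqincr_sum x n (j * 2 ^ (n - N))) @ \oo --> L <->
                     ell2_seq x (dyad N j) @ \oo --> L.
  apply: (cvg_halving_rec_iff (N := N)) => n Nn.
  by apply: sqincr_sum_refineS; rewrite ?j_gt0.
by split=> L; rewrite (cvg_sub0_iff qv_sqincr) sqincr_ell2 ?ell12.
Qed.
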